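(* Let $n\ge2$, $\epsilon\in[-1,1]$, $h\in[0,1]$. For $0\le p\le 2n$, $$\min_{\sigma\in\mathcal C(p)}H(\sigma)=\begin{cases}n-(p-n)^2-p^2-\epsilon(n-2p)-2h(p-n) & 0\le p\le n,\\ n-(2n-p)^2-(p-n)^2-\epsilon(2p-3n)-2h(p-n) & n\le p\le 2n.\end{cases}$$ Moreover, for $0\le p\le n$ this minimum is attained on $C(p,0,0)$ and on $C(0,p,0)$, and for $n\le p\le 2n$ it is attained on $C(n,p-n,p-n)$ and on $C(p-n,n,p-n)$.
   Context: The graph $\mathcal G(2,n)$ has vertex set $V=V^{(1)}\cup V^{(2)}$ with $V^{(1)}=\{1,\dots,n\}$, $V^{(2)}=\{n+1,\dots,2n\}$; its edge set is $E=E_{\mathrm{int}}\cup E_{\mathrm{cross}}$, where $E_{\mathrm{int}}$ consists of all pairs of distinct vertices in the same $V^{(k)}$ and $E_{\mathrm{cross}}=\{\{i,i+n\}:1\le i\le n\}$. For $\sigma\in\{-1,+1\}^V$, $H(\sigma)=-\sum_{\{i,j\}\in E_{\mathrm{int}}}\sigma_i\sigma_j-\epsilon\sum_{\{i,j\}\in E_{\mathrm{cross}}}\sigma_i\sigma_j-h\sum_{i\in V}\sigma_i$. $C(p_1,p_2,a)$ is the set of configurations with exactly $p_1$ vertices of spin $+1$ in $V^{(1)}$, exactly $p_2$ vertices of spin $+1$ in $V^{(2)}$, and exactly $a$ cross-edges both of whose endpoints have spin $+1$. $\mathcal C(p)$ is the set of configurations with exactly $p$ vertices of spin $+1$ in $V$.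 *)

From mathcomp Require Import all_boot all_order all_algebra.
Set Implicit Arguments. Unset Strict Implicit. Unset Printing Implicit Defensive.
Import Order.TTheory GRing.Theory Num.Theory.
Local Open Scope ring_scope.

(* The graph G(2,n): vertex set 'I_(n + n).  V^(1) = {lshift n i | i : 'I_n}
   (vertices 0..n-1, i.e. paper's 1..n), V^(2) = {rshift n i | i : 'I_n}
   (vertices n..2n-1, i.e. paper's n+1..2n).  Cross edge {i, i+n} is
   {lshift n i, rshift n i}. *)

Definition config (n : nat) := {ffun 'I_(n + n) -> bool}.

Definition spin (R : numDomainType) (n : nat) (s : config n) (v : 'I_(n + n)) : R :=
  if s v then 1 else -1.

Definition same_part (n : nat) (u v : 'I_(n + n)) : bool := (u < n)%N == (v < n)%N.

(* Hamiltonian: internal edges = unordered pairs {u,v}, u<v, in the same part. *)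
Definition Ham (R : numDomainType) (n : nat) (eps h : R) (s : config n) : R :=
  - (\sum_(u : 'I_(n + n)) \sum_(v : 'I_(n + n) | (u < v)%N && same_part u v)
        spin R s u * spin R s v)
  - eps * (\sum_(i < n) spin R s (lshift n i) * spin R s (rshift n i))
  - h * (\sum_(v : 'I_(n + n)) spin R s v).

Definition inCp (n p : nat) (s : config n) : bool :=
  #|[set v : 'I_(n + n) | s v]| == p.

Definition inC3 (n p1 p2 a : nat) (s : config n) : bool :=
  [&& #|[set i : 'I_n | s (lshift n i)]| == p1,
      #|[set i : 'I_n | s (rshift n i)]| == p2 &
      #|[set i : 'I_n | s (lshift n i) && s (rshift n i)]| == a].

Definition minH (R : numDomainType) (n p : nat) (eps h : R) : R :=
  let n' := n%:R in let p' := p%:R in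
  if (p <= n)%N then
    n' - (p' - n') ^+ 2 - p' ^+ 2 - eps * (n' - 2 * p') - 2 * h * (p' - n')
  else
    n' - (2 * n' - p') ^+ 2 - (p' - n') ^+ 2 - eps * (2 * p' - 3 * n')
      - 2 * h * (p' - n').

Definition is_min_on (R : numDomainType) (n : nat) (eps h : R)
    (C : config n -> bool) (m : R) : Prop :=
  (exists2 s, C s & Ham eps h s = m) /\ (forall s, C s -> m <= Ham eps h s).

(* "the minimum m is attained on the set C": C is nonempty and H = m on it
   (H is constant on each C(p1,p2,a)). *)
Definition attained_on (R : numDomainType) (n : nat) (eps h : R)
    (C : config n -> bool) (m : R) : Prop :=
  (exists s, C s) /\ (forall s, C s -> Ham eps h s = m).

Arguments inCp : clear implicits.
Arguments inC3 : clear implicits.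

From mathcomp Require Import all_boot all_order all_algebra.
From mathcomp Require Import zify ring lra.
Import Order.TTheory GRing.Theory Num.Theory.

Set Implicit Arguments.
Unset Strict Implicit.
Unset Printing Implicit Defensive.

Local Open Scope ring_scope.

(* Write p1, p2 for the numbers of plus spins in the two cliques and a for the
   number of cross edges with both ends plus.  The internal sum of a clique is
   ((sum of its spins)^2 - size) / 2, so the energy depends on the
   configuration only through (p1, p2, a).  For p = p1 + p2 <= n it exceeds the
   claimed minimum by 4 (p1 p2 - a) + 4 (1 - eps) a, which is nonnegative
   because a <= min p1 p2 <= p1 p2 and eps <= 1; for p >= n the same holds with
   the minus counts (n - p1, n - p2, n - p1 - p2 + a) in place of (p1, p2, a).
   Both gaps vanish on the block configurations with one clique entirely minus
   (resp. entirely plus). *)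

Lemma sumr_indicator (R : numDomainType) (T : finType) (P : pred T) :
  \sum_(i : T) (if P i then 1 else 0 : R) = #|[set i | P i]|%:R.
Proof.
rewrite -big_mkcond /= -[in RHS]sum1_card natr_sum.
by apply: eq_bigl => i; rewrite inE.
Qed.

Lemma sum_ltn_pairs (R : numDomainType) m (F : 'I_m -> 'I_m -> R) :
  (forall u v, F u v = F v u) ->
  2 * \sum_(u : 'I_m) \sum_(v : 'I_m | (u < v)%N) F u v
  = \sum_u \sum_v F u v - \sum_u F u u.
Proof.
move=> F_sym.
have split_row u : \sum_v F u v =
    \sum_(v : 'I_m | (u < v)%N) F u v + \sum_(v : 'I_m | (v < u)%N) F u v + F u u.
  rewrite (bigD1 u) //= addrC; congr (_ + _).
  rewrite (bigID (fun v : 'I_m => (u < v)%N)) /=.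
  by congr (_ + _); apply: eq_bigl => v; rewrite -val_eqE /=; case: ltngtP.
have swap : \sum_(u : 'I_m) \sum_(v : 'I_m | (v < u)%N) F u v
    = \sum_(u : 'I_m) \sum_(v : 'I_m | (u < v)%N) F u v.
  under eq_bigr do rewrite big_mkcond.
  rewrite exchange_big /=; apply: eq_bigr => u _; rewrite [RHS]big_mkcond /=.
  by apply: eq_bigr => v _; rewrite F_sym.
rewrite (eq_bigr _ (fun u _ => split_row u)) !big_split /= swap.
by rewrite addrK mulr2n mulrDl mul1r.
Qed.

Lemma leq_muln_of_leq (x y z : nat) : (x <= y)%N -> (x <= z)%N -> (x <= y * z)%N.
Proof.
case: z => [|z]; first by rewrite leqn0 => _ /eqP ->.
by move=> le_xy _; rewrite (leq_trans le_xy) // leq_pmulr.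
Qed.

Lemma card_ord_ltn n k : (k <= n)%N -> #|[set i : 'I_n | (i < k)%N]| = k.
Proof.
move=> le_kn.
have -> : [set i : 'I_n | (i < k)%N] = [set widen_ord le_kn j | j in 'I_k].
  apply/setP => i; rewrite inE.
  apply/idP/imsetP => [lt_ik | [j _ ->]]; last exact: (ltn_ord j).
  by exists (Ordinal lt_ik) => //; apply: val_inj.
by rewrite card_imset ?card_ord // => x y /(congr1 val) /= /val_inj.
Qed.

Section Spins.

Variables (R : numDomainType) (n : nat) (s : config n).

Lemma spin_indicator v : spin R s v = 2 * (if s v then 1 else 0) - 1.
Proof. by rewrite /spin; case: (s v); ring. Qed.

Lemma spin_mul_self v : spin R s v * spin R s v = 1.
Proof. by rewrite /spin; case: (s v); ring. Qed.

Lemma sum_spin (T : finType) (g : T -> 'I_(n + n)) :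
  \sum_(i : T) spin R s (g i) = 2 * #|[set i | s (g i)]|%:R - #|T|%:R.
Proof.
under eq_bigr do rewrite spin_indicator.
by rewrite sumrB -mulr_sumr sumr_indicator sumr_const.
Qed.

Lemma same_part_ll (i j : 'I_n) : same_part (lshift n i) (lshift n j).
Proof. by rewrite /same_part /= !ltn_ord. Qed.

Lemma same_part_rr (i j : 'I_n) : same_part (rshift n i) (rshift n j).
Proof. by rewrite /same_part /= !ltnNge !leq_addr. Qed.

Lemma same_part_lr (i j : 'I_n) : same_part (lshift n i) (rshift n j) = false.
Proof. by rewrite /same_part /= ltn_ord ltnNge leq_addr. Qed.

Lemma same_part_rl (i j : 'I_n) : same_part (rshift n i) (lshift n j) = false.
Proof. by rewrite /same_part /= ltn_ord ltnNge leq_addr. Qed.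

Lemma internal_sumE :
  2 * (\sum_(u : 'I_(n + n)) \sum_(v : 'I_(n + n) | (u < v)%N && same_part u v)
          spin R s u * spin R s v)
  = (\sum_(i < n) spin R s (lshift n i)) ^+ 2
    + (\sum_(i < n) spin R s (rshift n i)) ^+ 2 - (n + n)%:R.
Proof.
set f := spin R s.
pose F u v := if same_part u v then f u * f v else 0.
under eq_bigr do rewrite big_mkcondr -/(F _ _).
rewrite sum_ltn_pairs => [|u v]; last by rewrite /F /same_part eq_sym mulrC.
congr (_ - _).
  rewrite big_split_ord /= !expr2 !mulr_suml.
  congr (_ + _); apply: eq_bigr => i _; rewrite big_split_ord /= /F mulr_sumr.
    rewrite [X in _ + X]big1 => [|j _]; last by rewrite same_part_lr.
    by rewrite addr0; apply: eq_bigr => j _; rewrite same_part_ll.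
  rewrite [X in X + _]big1 => [|j _]; last by rewrite same_part_rl.
  by rewrite add0r; apply: eq_bigr => j _; rewrite same_part_rr.
rewrite (eq_bigr (fun _ => 1)) => [|u _]; first by rewrite sumr_const card_ord.
by rewrite /F /same_part eqxx spin_mul_self.
Qed.

End Spins.

Definition plus1 n (s : config n) := #|[set i : 'I_n | s (lshift n i)]|.
Definition plus2 n (s : config n) := #|[set i : 'I_n | s (rshift n i)]|.
Definition plus_cross n (s : config n) :=
  #|[set i : 'I_n | s (lshift n i) && s (rshift n i)]|.

Lemma card_plus_spins n (s : config n) :
  #|[set v : 'I_(n + n) | s v]| = (plus1 s + plus2 s)%N.
Proof.
rewrite /plus1 /plus2 -!sum1_card big_split_ord /=.
by congr (_ + _); apply: eq_bigl => i; rewrite !inE.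
Qed.

Lemma plus_counts_bounds n (s : config n) :
  [/\ (plus_cross s <= plus1 s)%N, (plus_cross s <= plus2 s)%N
    & (plus1 s + plus2 s <= n + plus_cross s)%N].
Proof.
have card_le_n (A : {set 'I_n}) : (#|A| <= n)%N.
  by rewrite (leq_trans (max_card _)) // card_ord.
split; rewrite /plus1 /plus2 /plus_cross.
- by apply/subset_leq_card/subsetP => i; rewrite !inE => /andP[].
- by apply/subset_leq_card/subsetP => i; rewrite !inE => /andP[].
have -> : [set i | s (lshift n i) && s (rshift n i)]
    = [set i | s (lshift n i)] :&: [set i | s (rshift n i)].
  by apply/setP => i; rewrite !inE.
by rewrite -cardsUI leq_add2r card_le_n.
Qed.

Definition energy {R : numDomainType} n (eps h : R) (p1 p2 a : nat) : R :=
  n%:R - ((2 * p1%:R - n%:R) ^+ 2 + (2 * p2%:R - n%:R) ^+ 2) / 2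
  - eps * (n%:R - 2 * p1%:R - 2 * p2%:R + 4 * a%:R)
  - h * (2 * p1%:R + 2 * p2%:R - 2 * n%:R).

Section Energy.

Variables (R : realFieldType) (n : nat) (eps h : R).

Lemma cross_sumE (s : config n) :
  \sum_(i < n) spin R s (lshift n i) * spin R s (rshift n i) =
  n%:R - 2 * (plus1 s)%:R - 2 * (plus2 s)%:R + 4 * (plus_cross s)%:R.
Proof.
under eq_bigr do rewrite !spin_indicator.
transitivity (\sum_(i < n) (1 - 2 * (if s (lshift n i) then 1 else 0)
   - 2 * (if s (rshift n i) then 1 else 0)
   + 4 * (if s (lshift n i) && s (rshift n i) then 1 else 0)) : R).
  by apply: eq_bigr => i _; case: (s (lshift n i)); case: (s (rshift n i)) => /=; ring.
by rewrite big_split /= !sumrB -!mulr_sumr !sumr_indicator sumr_const card_ord.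
Qed.

Lemma HamE (s : config n) :
  Ham eps h s = energy n eps h (plus1 s) (plus2 s) (plus_cross s).
Proof.
have := internal_sumE R s; set X := (X in 2 * X = _) => X_E.
rewrite /Ham -/X cross_sumE big_split_ord /=.
move: X_E; rewrite !(sum_spin R s (lshift n)) !(sum_spin R s (fun i => rshift n i)).
by rewrite /energy card_ord natrD -/(plus1 s) -/(plus2 s) => X_E; lra.
Qed.

Lemma Ham_inC3 p1 p2 a (s : config n) :
  inC3 n p1 p2 a s -> Ham eps h s = energy n eps h p1 p2 a.
Proof. by case/and3P => /eqP <- /eqP <- /eqP <-; exact: HamE. Qed.

Lemma energy_sub_minH_low p1 p2 a : (p1 + p2 <= n)%N ->
  energy n eps h p1 p2 a - minH n (p1 + p2) eps h
  = 4 * (p1%:R * p2%:R - a%:R) + 4 * (1 - eps) * a%:R.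
Proof. by move=> le_pn; rewrite /energy /minH le_pn natrD; field. Qed.

Lemma energy_sub_minH_high p1 p2 a : (n <= p1 + p2)%N ->
  let q1 := n%:R - p1%:R in let q2 := n%:R - p2%:R in
  let b := n%:R + a%:R - p1%:R - p2%:R in
  energy n eps h p1 p2 a - minH n (p1 + p2) eps h
  = 4 * (q1 * q2 - b) + 4 * (1 - eps) * b.
Proof.
move=> le_np /=; rewrite /energy /minH natrD; case: leqP => [le_pn | _]; last by field.
have -> : p2%:R = n%:R - p1%:R :> R.
  by rewrite -natrB; [congr _%:R | ]; lia.
by field.
Qed.

Lemma energy_gap_ge0 (x y b : nat) : eps <= 1 -> (b <= x)%N -> (b <= y)%N ->
  0 <= 4 * (x%:R * y%:R - b%:R) + 4 * (1 - eps) * b%:R.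
Proof.
move=> le_eps1 le_bx le_by.
have : b%:R <= x%:R * y%:R :> R by rewrite -natrM ler_nat leq_muln_of_leq.
by move: (ler0n R b); nra.
Qed.

Lemma minH_le_energy p1 p2 a : eps <= 1 ->
  (a <= p1)%N -> (a <= p2)%N -> (p1 + p2 <= n + a)%N ->
  minH n (p1 + p2) eps h <= energy n eps h p1 p2 a.
Proof.
move=> le_eps1 le_a1 le_a2 le_pna; rewrite -subr_ge0.
case: (leqP (p1 + p2) n) => [le_pn | /ltnW le_np].
  by rewrite energy_sub_minH_low // energy_gap_ge0.
rewrite energy_sub_minH_high //=.
have -> : n%:R + a%:R - p1%:R - p2%:R = (n + a - p1 - p2)%N%:R :> R.
  by rewrite !natrB ?natrD //; lia.
by rewrite -!natrB ?energy_gap_ge0 //; lia.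
Qed.

Lemma energy_sym p1 p2 a : energy n eps h p1 p2 a = energy n eps h p2 p1 a.
Proof. by rewrite /energy; ring. Qed.

Lemma energy_low_extremal p : (p <= n)%N -> energy n eps h p 0 0 = minH n p eps h.
Proof.
move=> le_pn; apply/eqP; rewrite -subr_eq0 -[p in minH _ p]addn0.
by rewrite energy_sub_minH_low ?addn0 //; apply/eqP; ring.
Qed.

Lemma energy_high_extremal p : (n <= p)%N ->
  energy n eps h n (p - n) (p - n) = minH n p eps h.
Proof.
move=> le_np; apply/eqP; rewrite -subr_eq0 -[p in minH _ p](subnKC le_np).
by rewrite energy_sub_minH_high ?subnKC //=; apply/eqP; ring.
Qed.

End Energy.

Definition block_config n (k1 k2 : nat) : config n :=
  [ffun v => match split v with inl i => (i < k1)%N | inr i => (i < k2)%N end].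

Lemma block_config_inC3 n k1 k2 : (k1 <= n)%N -> (k2 <= n)%N ->
  inC3 n k1 k2 (minn k1 k2) (block_config n k1 k2).
Proof.
move=> le_k1n le_k2n.
have blockL (i : 'I_n) : block_config n k1 k2 (lshift n i) = (i < k1)%N.
  by rewrite ffunE (unsplitK (inl i)).
have blockR (i : 'I_n) : block_config n k1 k2 (rshift n i) = (i < k2)%N.
  by rewrite ffunE (unsplitK (inr i)).
have le_min_n : (minn k1 k2 <= n)%N by rewrite geq_min le_k1n.
apply/and3P; split; apply/eqP.
- by rewrite -[RHS](card_ord_ltn le_k1n); apply: eq_card => i; rewrite !inE blockL.
- by rewrite -[RHS](card_ord_ltn le_k2n); apply: eq_card => i; rewrite !inE blockR.
rewrite -[RHS](card_ord_ltn le_min_n).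
by apply: eq_card => i; rewrite !inE blockL blockR leq_min.
Qed.

Lemma inC3_inCp n p1 p2 a (s : config n) : inC3 n p1 p2 a s -> inCp n (p1 + p2) s.
Proof. by case/and3P => /eqP <- /eqP <- _; rewrite /inCp card_plus_spins. Qed.

Lemma attained_on_block (R : realFieldType) n (eps h : R) p1 p2 a m :
  (p1 <= n)%N -> (p2 <= n)%N -> minn p1 p2 = a -> energy n eps h p1 p2 a = m ->
  attained_on eps h (inC3 n p1 p2 a) m.
Proof.
move=> le_1n le_2n <- <-; split; last by move=> s /Ham_inC3.
by exists (block_config n p1 p2); exact: block_config_inC3.
Qed.

Section Attainment.

Variables (R : realFieldType) (n : nat) (eps h : R).

Lemma minH_attained_low p : (p <= n)%N ->
  attained_on eps h (inC3 n p 0 0) (minH n p eps h) /\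
  attained_on eps h (inC3 n 0 p 0) (minH n p eps h).
Proof.
move=> le_pn; split; apply: attained_on_block; rewrite ?minn0 ?min0n //.
  exact: energy_low_extremal.
by rewrite energy_sym energy_low_extremal.
Qed.

Lemma minH_attained_high p : (n <= p)%N -> (p <= 2 * n)%N ->
  attained_on eps h (inC3 n n (p - n) (p - n)) (minH n p eps h) /\
  attained_on eps h (inC3 n (p - n) n (p - n)) (minH n p eps h).
Proof.
move=> le_np le_p2n; have le_pn_n : (p - n <= n)%N by lia.
split; apply: attained_on_block; rewrite ?(minn_idPr le_pn_n) ?(minn_idPl le_pn_n) //.
  exact: energy_high_extremal.
by rewrite energy_sym energy_high_extremal.
Qed.

End Attainment.

Theorem proposition5p4 (R : realFieldType) (n : nat) (eps h : R) :
  (2 <= n)%N -> -1 <= eps <= 1 -> 0 <= h <= 1 ->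
  forall p : nat, (p <= 2 * n)%N ->
    is_min_on eps h (inCp n p) (minH n p eps h) /\
    ((p <= n)%N ->
       attained_on eps h (inC3 n p 0 0) (minH n p eps h) /\
       attained_on eps h (inC3 n 0 p 0) (minH n p eps h)) /\
    ((n <= p)%N ->
       attained_on eps h (inC3 n n (p - n) (p - n)) (minH n p eps h) /\
       attained_on eps h (inC3 n (p - n) n (p - n)) (minH n p eps h)).
Proof.
move=> _ /andP[_ le_eps1] _ p le_p2n.
split; last by split=> [/minH_attained_low | /minH_attained_high]; apply.
split=> [|s]; last first.
  rewrite /inCp card_plus_spins HamE => /eqP <-.
  by case: (plus_counts_bounds s) => *; apply: minH_le_energy.
case: (leqP p n) => [le_pn | /ltnW le_np].
  have [[[s s_in] Hs] _] := minH_attained_low eps h le_pn.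
  by exists s; [rewrite -[p]addn0; exact: inC3_inCp s_in | exact: Hs].
have [[[s s_in] Hs] _] := minH_attained_high eps h le_np le_p2n.
by exists s; [rewrite -(subnKC le_np); exact: inC3_inCp s_in | exact: Hs].
Qed.
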